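(* Let $n$ and $\ell$ be positive integers with $\ell$ odd such that $\Omega_\ell(n)$ is a powerful number. If $p\in P(n)$, then $\gcd(p(p-1),\ell)>1$.
   Context: A positive integer $a$ is called a powerful number if for every prime $p$, $p\mid a$ implies $p^2\mid a$. $\Omega_\ell(n)=\prod_{a=1}^{n}(a^\ell+1)$. For a positive integer $n$, $P(n)$ denotes the set of primes $p$ with $\frac{n+1}{2}<p\le n+1$. *)

From mathcomp Require Import all_boot.
Set Implicit Arguments. Unset Strict Implicit. Unset Printing Implicit Defensive.

Definition powerful (a : nat) : Prop :=
  0 < a /\ forall p : nat, prime p -> p %| a -> p ^ 2 %| a.

Definition Omega (l n : nat) : nat := \prod_(1 <= a < n.+1) (a ^ l + 1).

(* P(n) = primes p with (n+1)/2 < p <= n+1, i.e. n+1 < 2p <= 2(n+1) *)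
Definition inP (n p : nat) : Prop := prime p /\ n.+1 < 2 * p /\ p <= n.+1.

From mathcomp Require Import all_boot all_algebra ring zify.

(* Suppose gcd(p(p-1), l) = 1, i.e. p does not divide l and l is
   coprime to p - 1.  Put x := p - 1, so 1 <= x <= n.
   - Since l is odd, x^l + 1 = l(x+1) mod (x+1)^2; hence p divides x^l + 1
     exactly once in the sense that p^2 | x^l + 1 would force p | l.
   - Since l is coprime to p - 1, a |-> a^l is injective modulo p (Fermat), so
     p | a^l + 1 = a^l - x^l (mod p) forces a = x (mod p); the bound n < 2p - 1
     then forces a = x.  So x^l + 1 is the only factor of Omega_l(n) that p
     divides.
   - Omega_l(n) is powerful and p divides it, so p^2 divides it, hence p^2
     divides the single factor x^l + 1, hence p | l: a contradiction. *)

Import GRing.Theory.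

Section OddPowerCongruence.
Local Open Scope ring_scope.

(* For odd l, x^l + 1 = l (x + 1) modulo (x + 1)^2.  Induction on l: passing
   from l to l + 2 multiplies by x^2 = 1 - 2 (x + 1) modulo (x + 1)^2. *)
Lemma odd_power_succ_mod_square (x : int) (l : nat) : odd l ->
  ((x + 1) ^+ 2 %| x ^+ l + 1 - l%:R * (x + 1))%Z.
Proof.
move=> odd_l; rewrite -(odd_double_half l) odd_l add1n.
elim: l./2 => [|m IHm]; first by rewrite expr1 mul1r subrr dvdz0.
have -> : x ^+ (m.+1.*2.+1) + 1 - (m.+1.*2.+1)%:R * (x + 1) =
    x ^+ 2 * (x ^+ m.*2.+1 + 1 - (m.*2.+1)%:R * (x + 1))
    + ((m.*2.+1)%:R * (x - 1) - 1) * (x + 1) ^+ 2.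
  by rewrite doubleS !exprS -!mul2n !mulrS !natrM; ring.
by apply: rpredD; [exact: dvdz_mull | exact/dvdz_mull/dvdzz].
Qed.

End OddPowerCongruence.

Lemma pred_power_mod_square (p l : nat) : 0 < p -> odd l ->
  (p - 1) ^ l + 1 = l * p %[mod p ^ 2].
Proof.
move=> p_gt0 odd_l; have := odd_power_succ_mod_square (p - 1)%N l odd_l.
rewrite -PoszD subnK // -eqz_mod_dvd => /eqP congr_int; apply/eqP.
rewrite -eqz_nat -!modz_nat; rewrite -!natz in congr_int.
by rewrite -!natz natrD !natrX natrM congr_int.
Qed.

Lemma dvd_pred_power_succ (p l : nat) : 0 < p -> odd l -> p %| (p - 1) ^ l + 1.
Proof.
move=> p_gt0 odd_l; have p_dvd_sq : p %| p ^ 2 := dvdn_exp (ltn0Sn 1) (dvdnn p).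
by rewrite /dvdn -(modn_dvdm _ p_dvd_sq) pred_power_mod_square // modn_dvdm // modnMl.
Qed.

Lemma sq_dvd_pred_power_succ {p l : nat} : 0 < p -> odd l ->
  p ^ 2 %| (p - 1) ^ l + 1 -> p %| l.
Proof.
move=> p_gt0 odd_l; rewrite /dvdn pred_power_mod_square // -/(dvdn _ _).
by rewrite -mulnn dvdn_pmul2r.
Qed.

Lemma expn_fermat_period (a p k : nat) : prime p ->
  a ^ (1 + k * (p - 1)) = a %[mod p].
Proof.
move=> p_prime; have p_gt0 := prime_gt0 p_prime.
elim: k => [|k IHk]; first by rewrite mul0n addn0 expn1.
rewrite mulSn addnCA expnD -modnMmr IHk modnMmr -expnSr subn1 prednK //.
exact: fermat_little.
Qed.

Lemma expn_inj_mod {a b p l : nat} : prime p -> 0 < l -> coprime l (p - 1) ->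
  a ^ l = b ^ l %[mod p] -> a = b %[mod p].
Proof.
move=> p_prime l_gt0 /eqP gcd1 eq_pow.
have [u v bezout _] := egcdnP (p - 1) l_gt0; rewrite gcd1 in bezout.
have exponent : 1 + v * (p - 1) = l * u by rewrite addnC -bezout mulnC.
rewrite -(expn_fermat_period a p v p_prime) -(expn_fermat_period b p v p_prime).
by rewrite exponent !expnM -modnXm eq_pow modnXm.
Qed.

Lemma residue_pred_unique (a p : nat) : 0 < p -> a < p.*2.-1 ->
  a = p - 1 %[mod p] -> a = p - 1.
Proof.
move=> p_gt0 a_lt; rewrite [in RHS]modn_small; last lia.
have [a_lt_p | p_le_a] := ltnP a p; first by rewrite modn_small.
by rewrite -(subnKC p_le_a) modnDl modn_small; lia.
Qed.

Lemma dvd_single_factor {I : eqType} {r : seq I} {F : I -> nat} {j : I} {d : nat} :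
  j \in r -> uniq r -> {in r, forall i, i != j -> coprime d (F i)} ->
  d %| \prod_(i <- r) F i -> d %| F j.
Proof.
move=> j_in r_uniq coprime_other_factors_coprime; rewrite (bigD1_seq j) //= Gauss_dvdl //.
rewrite big_seq_cond; apply: (big_ind (coprime d)) => [|u v|i /andP[]].
- exact: coprimen1.
- by rewrite coprimeMr => -> ->.
- exact: coprime_other_factors_coprime.
Qed.

Theorem lemma2 (n l : nat) (hn : 0 < n) (hl : 0 < l) (hodd : odd l)
  (hpow : powerful (Omega l n)) (p : nat) (hp : inP n p) :
  1 < gcdn (p * (p - 1)) l.
Proof.
case: hp => p_prime [n_lt_2p p_le]; have p_gt0 := prime_gt0 p_prime.
rewrite ltnNge; apply/negP => gcd_le1.
have : coprime (p * (p - 1)) l by rewrite /coprime eqn_leq gcd_le1 gcdn_gt0 hl orbT.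
rewrite coprimeMl => /andP[coprime_p_l coprime_pred_l].
have pred_in_range : p - 1 \in index_iota 1 n.+1 by rewrite mem_index_iota; lia.
have p_dvd_pred_factor : p %| (p - 1) ^ l + 1 by exact: dvd_pred_power_succ.
(* p divides no factor a^l + 1 with a <> p - 1, by injectivity of a |-> a^l. *)
have other_factors_coprime :
    {in index_iota 1 n.+1, forall a, a != p - 1 -> coprime (p ^ 2) (a ^ l + 1)}.
  move=> a; rewrite mem_index_iota => a_range a_ne; rewrite coprimeXl // prime_coprime //.
  apply: contra a_ne => a_dvd; apply/eqP/residue_pred_unique => //; first lia.
  apply: (expn_inj_mod p_prime hl); first by rewrite coprime_sym.
  by apply/eqP; rewrite -(eqn_modDr 1) (eqP a_dvd) (eqP p_dvd_pred_factor).
have p_dvd_Omega : p %| Omega l n.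
  by rewrite /Omega (bigD1_seq (p - 1)) ?iota_uniq // dvdn_mulr.
have sq_dvd_pred_factor : p ^ 2 %| (p - 1) ^ l + 1.
  apply: (dvd_single_factor pred_in_range (iota_uniq _ _) other_factors_coprime).
  exact: hpow.2 p p_prime p_dvd_Omega.
move: coprime_p_l; rewrite prime_coprime // => /negP; apply.
exact: sq_dvd_pred_power_succ p_gt0 hodd sq_dvd_pred_factor.
Qed.
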